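(* Let $(\Omega,\mathcal A,\mu)$ be a probability space admitting a learning rule that is consistent under every learning problem $(\mu,\eta)$ with $\eta:\Omega\to[0,1]$ an $\mathcal A$-measurable regression function. Then the Maharam type of the measure algebra $(\mathcal A,\mu\circ\Delta)$ does not exceed the cardinality of $\Omega$.
   Context: For a measurable space $(\Omega,\mathcal A)$, a learning rule $\mathcal L$ assigns to every $n\ge1$, labelled sample $\sigma\in\Omega^n\times\{0,1\}^n$ and $x\in\Omega$ a label $\mathcal L_n(\sigma)(x)\in\{0,1\}$ (measurably in $(\sigma,x)$), so that $\mathcal L_n(\sigma)$ is a measurable classifier $\Omega\to\{0,1\}$. A probability measure $\mu$ on $\Omega$ together with a measurable $\eta:\Omega\to[0,1]$ determines a probability measure $\tilde\mu$ on $\Omega\times\{0,1\}$ by $\tilde\mu(A\times\{1\})=\int_A\eta\,d\mu$, $\tilde\mu(A\times\{0\})=\int_A(1-\eta)\,d\mu$. The error is $\mathrm{err}_{\tilde\mu}(\mathcal L_n)=(\tilde\mu^n\otimes\tilde\mu)\{(\sigma,x,y):\mathcal L_n(\sigma)(x)\ne y\}$ and the Bayes error is $\ell^*(\tilde\mu)=\inf_T\tilde\mu\{(x,y):T(x)\ne y\}$ over measurable classifiers $T$; the rule is consistent under $(\mu,\eta)$ if $\mathrm{err}_{\tilde\mu}(\mathcal L_n)\to\ell^*(\tilde\mu)$. The measure algebra $(\mathcal A,\mu\circ\Delta)$ is the quotient of $\mathcal A$ by the ideal of $\mu$-null sets, with metric $d(A,B)=\mu(A\Delta B)$. Its Maharam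 type is the smallest cardinality of a subset of this Boolean algebra generating a subalgebra that is dense for this metric. *)

From HB Require Import structures.
From mathcomp Require Import all_boot all_order all_algebra.
From mathcomp Require Import all_classical all_reals all_analysis.
Set Implicit Arguments. Unset Strict Implicit. Unset Printing Implicit Defensive.
Import Order.TTheory GRing.Theory Num.Theory.
Local Open Scope classical_set_scope.
Local Open Scope ring_scope.

Definition learning_rule d (T : measurableType d) :=
  forall n : nat, n.-tuple (T * bool)%type -> T -> bool.

Definition is_learning_rule d (T : measurableType d)
  (L : learning_rule T) : Prop :=
  forall n : nat,
    measurable_fun setT (fun p : (n.-tuple (T * bool) * T)%type => L n p.1 p.2).

Definition joint_law d (T : measurableType d) (R : realType)
  (mu : probability T R) (eta : T -> R) (P : probability (T * bool)%type R) : Prop :=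
  forall A : set T, measurable A ->
    (P (A `*` [set true]) = \int[mu]_(x in A) (eta x)%:E)%E /\
    (P (A `*` [set false]) = \int[mu]_(x in A) (1 - eta x)%:E)%E.

Definition is_power_measure d (T : measurableType d) (R : realType) (n : nat)
  (P : probability (T * bool)%type R) (Q : probability (n.-tuple (T * bool)%type) R) : Prop :=
  forall A : 'I_n -> set (T * bool)%type, (forall i, measurable (A i)) ->
    Q [set t | forall i, A i (tnth t i)] = (\prod_(i < n) P (A i))%E.

Definition rule_error d (T : measurableType d) (R : realType)
  (L : learning_rule T) (n : nat) (P : probability (T * bool)%type R)
  (Q : probability (n.-tuple (T * bool)%type) R) : \bar R :=
  (Q \x P)%E [set p : (n.-tuple (T * bool) * (T * bool))%type | L n p.1 p.2.1 != p.2.2].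

Definition bayes_error d (T : measurableType d) (R : realType)
  (P : probability (T * bool)%type R) : \bar R :=
  ereal_inf [set P [set p : (T * bool)%type | h p.1 != p.2] |
             h in [set h : T -> bool | measurable_fun setT h]].

Definition universally_consistent d (T : measurableType d) (R : realType)
  (mu : probability T R) (L : learning_rule T) : Prop :=
  forall eta : T -> R, measurable_fun setT eta ->
    (forall x, 0 <= eta x <= 1) ->
  forall P : probability (T * bool)%type R, joint_law mu eta P ->
  forall Q : forall n : nat, probability (n.-tuple (T * bool)%type) R,
    (forall n, @is_power_measure _ T R n P (Q n)) ->
    (fun n => @rule_error _ T R L n P (Q n)) @ \oo --> bayes_error P.

Definition gen_algebra T (G : set (set T)) : set (set T) :=
  \bigcap_(F in [set F : set (set T) | [/\ G `<=` F, F setT,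
      (forall A, F A -> F (~` A)) & (forall A B, F A -> F B -> F (A `|` B))]]) F.

(* G (a family of measurable sets, i.e. of representatives of elements of the
   measure algebra) generates a subalgebra that is dense for d(A,B)=mu(A Delta B). *)
Definition generates_dense_subalgebra d (T : measurableType d) (R : realType)
  (mu : probability T R) (G : set (set T)) : Prop :=
  G `<=` measurable /\
  forall A : set T, measurable A -> forall e : R, 0 < e ->
    exists2 B, gen_algebra G B & (mu ((A `\` B) `|` (B `\` A)) < e%:E)%E.

(* Maharam type of the measure algebra (A, mu o Delta) is <= |S|:
   there is a generating set of cardinality <= |S| (the Maharam type being the
   least such cardinality). *)
Definition maharam_type_le d (T : measurableType d) (R : realType)
  (mu : probability T R) U (S : set U) : Prop :=
  exists G : set (set T), generates_dense_subalgebra mu G /\ (G #<= S)%card.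

From HB Require Import structures.
From mathcomp Require Import all_boot all_order all_algebra.
From mathcomp Require Import all_classical all_reals all_analysis.
From mathcomp Require Import measurable_realfun.

(** A consistent rule run on the deterministic problem (mu, 1_A) has Bayes
    error 0, so for some sample size n and sample s the classifier
    {x | L_n(s)(x)} is mu-close to A.  For fixed n these classifiers are the
    sections of the measurable set {(s, x) | L_n(s)(x)}, and all sections of a
    measurable subset of a product lie in the sigma-algebra generated by a
    single countable family of measurable sets.  The union over n of these
    families is countable, and the algebra it generates is dense in its
    sigma-algebra, hence dense among all measurable sets: the Maharam type is
    countable, so at most |Omega| when Omega is infinite.  When Omega is
    finite, the atoms (the intersection of the measurable sets containing a
    point), one per point, generate every measurable set. *)

Unset Printing Implicit Defensive.
Import Order.TTheory GRing.Theory Num.Theory.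
Local Open Scope classical_set_scope.
Local Open Scope ring_scope.

Section GenAlgebra.
Context {T : Type} (G : set (set T)).

Lemma gen_algebra_sub : G `<=` gen_algebra G.
Proof. by move=> A GA F [GF _ _ _]; exact: GF. Qed.

Lemma gen_algebraT : gen_algebra G setT.
Proof. by move=> F [_ FT _ _]. Qed.

Lemma gen_algebraC A : gen_algebra G A -> gen_algebra G (~` A).
Proof. by move=> GA F FG; case: (FG) => _ _ FC _; apply: FC; exact: GA FG. Qed.

Lemma gen_algebraU A B :
  gen_algebra G A -> gen_algebra G B -> gen_algebra G (A `|` B).
Proof.
by move=> GA GB F FG; case: (FG) => _ _ _ FU; apply: FU; [exact: GA FG|exact: GB FG].
Qed.

Lemma gen_algebra0 : gen_algebra G set0.
Proof. by rewrite -setCT; apply: gen_algebraC; exact: gen_algebraT. Qed.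

Lemma gen_algebra_bigcup {I : choiceType} {D : set I} {F : I -> set T} :
  finite_set D -> (forall i, D i -> gen_algebra G (F i)) ->
  gen_algebra G (\bigcup_(i in D) F i).
Proof.
move=> finD GF; rewrite -bigsetU_fset_set // big_seq.
apply: (big_ind (gen_algebra G)); [exact: gen_algebra0|exact: gen_algebraU|].
by move=> i; rewrite in_fset_set // inE; exact: GF.
Qed.

End GenAlgebra.

Lemma gen_algebra_measurable {d} {T : measurableType d} {G : set (set T)} :
  G `<=` measurable -> gen_algebra G `<=` measurable.
Proof.
move=> GM A GA; apply: GA; split => //.
- by move=> B; exact: measurableC.
- by move=> B C; exact: measurableU.
Qed.

Definition symdiff {T} (A B : set T) := (A `\` B) `|` (B `\` A).

Section SymmetricDifference.
Context {T : Type}.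
Implicit Types A B C : set T.

Lemma symdiffxx A : symdiff A A = set0.
Proof. by rewrite /symdiff setDv setU0. Qed.

Lemma symdiffCC A B : symdiff (~` A) (~` B) = symdiff A B.
Proof. by rewrite /symdiff !setDE !setCK setUC [B `&` _]setIC [A `&` _]setIC. Qed.

Lemma symdiff_trans A B C : symdiff A C `<=` symdiff A B `|` symdiff B C.
Proof. by move=> x; rewrite /symdiff /=; case: (pselect (B x)); tauto. Qed.

Lemma symdiffUU A B A' B' :
  symdiff (A `|` B) (A' `|` B') `<=` symdiff A A' `|` symdiff B B'.
Proof. by move=> x; rewrite /symdiff /=; tauto. Qed.

End SymmetricDifference.

Lemma measurable_symdiff {d} {T : measurableType d} {A B : set T} :
  measurable A -> measurable B -> measurable (symdiff A B).
Proof. by move=> mA mB; apply: measurableU; exact: measurableD. Qed.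

Lemma ereal_cvg0_lt {R : realType} {u : nat -> \bar R} {e : R} :
  u @ \oo --> 0%E -> (0 < e)%R -> exists N, (u N < e%:E)%E.
Proof.
move=> u0 e0; have e0' : (0 < e%:E)%E by rewrite lte_fin.
have [N _ uN] := u0 _ (open_ereal_lt' e0').
by exists N; apply: uN => /=.
Qed.

Section MeasureSymdiff.
Context {d : measure_display} {T : measurableType d} {R : realType}.
Variable mu : probability T R.
Local Open Scope ereal_scope.

Lemma le_measureU2 {A B C : set T} : A `<=` B `|` C ->
  measurable A -> measurable B -> measurable C -> mu A <= mu B + mu C.
Proof.
move=> ABC mA mB mC; apply: le_trans (measureU2 mu mB mC).
by apply: le_measure => //; rewrite inE //; exact: measurableU.
Qed.

Lemma measure_symdiff_trans {A B C : set T} :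
  measurable A -> measurable B -> measurable C ->
  mu (symdiff A C) <= mu (symdiff A B) + mu (symdiff B C).
Proof.
move=> mA mB mC.
by apply: (le_measureU2 (symdiff_trans A B C)); exact: measurable_symdiff.
Qed.

End MeasureSymdiff.

Section Approximation.
Context {d : measure_display} {T : measurableType d} {R : realType}.
Variables (mu : probability T R) (G : set (set T)).
Hypothesis GM : G `<=` measurable.
Local Open Scope ereal_scope.

Definition approximable (A : set T) := measurable A /\
  forall e : R, (0 < e)%R -> exists2 B, gen_algebra G B & mu (symdiff A B) < e%:E.

Lemma gen_algebra_approximable {A} : gen_algebra G A -> approximable A.
Proof.
move=> GA; split=> [|e e0]; first exact: gen_algebra_measurable GM _ GA.
by exists A => //; rewrite symdiffxx measure0 lte_fin.
Qed.

Lemma approximableC {A} : approximable A -> approximable (~` A).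
Proof.
move=> [mA aA]; split=> [|e /aA[B GB AB]]; first exact: measurableC.
by exists (~` B); [exact: gen_algebraC|rewrite symdiffCC].
Qed.

Lemma approximableU {A B} : approximable A -> approximable B -> approximable (A `|` B).
Proof.
move=> [mA aA] [mB aB]; split=> [|e e0]; first exact: measurableU.
have e2 : (0 < e / 2)%R by rewrite divr_gt0.
have [A' GA' AA'] := aA _ e2; have [B' GB' BB'] := aB _ e2.
have mA' := gen_algebra_measurable GM _ GA'.
have mB' := gen_algebra_measurable GM _ GB'.
exists (A' `|` B'); first exact: gen_algebraU.
rewrite [e]splitr EFinD; apply: le_lt_trans (lteD AA' BB').
by apply: (le_measureU2 mu (symdiffUU A B A' B'));
  apply: measurable_symdiff => //; exact: measurableU.
Qed.

Lemma approximable_bigsetU {F : (set T)^nat} N :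
  (forall k, approximable (F k)) ->
  approximable (\big[setU/set0]_(k < N) F k).
Proof.
move=> aF; apply: big_ind => //; last by move=> A B; exact: approximableU.
exact: gen_algebra_approximable (gen_algebra0 G).
Qed.

Lemma approximable_bigcup (F : (set T)^nat) :
  (forall k, approximable (F k)) -> approximable (\bigcup_k F k).
Proof.
move=> aF; pose S := \bigcup_k F k; pose U N := \big[setU/set0]_(k < N) F k.
have mS : measurable S by apply: bigcupT_measurable => k; case: (aF k).
have mU N : measurable (U N) by case: (approximable_bigsetU N aF).
have US N : U N `<=` S := @bigsetU_bigcup _ F N.
have tail_cvg0 : (fun N => mu (S `\` U N)) @ \oo --> 0.
  have <- : mu (\bigcap_N (S `\` U N)) = 0.
    rewrite (_ : \bigcap_N _ = set0) ?measure0 //; apply/seteqP; split=> // x SUx.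
    have [[k _ Fkx] _] := SUx 0%N I; have [_] := SUx k.+1 I.
    by apply; exact: bigsetU_sup Fkx.
  apply: nonincreasing_cvg_mu.
  - by rewrite (le_lt_trans (probability_le1 _ _)) ?ltey //; exact: measurableD.
  - by move=> N; exact: measurableD.
  - by apply: bigcapT_measurable => N; exact: measurableD.
  - by move=> m n mn; apply/subsetPset; apply: setDS; exact: (subset_bigsetU mn).
split=> // e e0; have e2 : (0 < e / 2)%R by rewrite divr_gt0.
have [N tailN] := ereal_cvg0_lt tail_cvg0 e2.
have [B GB UB] := (approximable_bigsetU N aF).2 _ e2.
exists B => //; rewrite [e]splitr EFinD.
have mB := gen_algebra_measurable GM _ GB.
apply: le_lt_trans (measure_symdiff_trans mu mS (mU N) mB) _.
by rewrite /symdiff (_ : U N `\` S = set0) ?setU0; [exact: lteD|rewrite setD_eq0; exact: US].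
Qed.

Lemma sigma_approximable : <<s G >> `<=` approximable.
Proof.
apply: smallest_sub; last by move=> A /gen_algebra_sub/gen_algebra_approximable; exact.
split.
- exact: gen_algebra_approximable (gen_algebra0 G).
- by move=> A /approximableC; rewrite setTD.
- exact: approximable_bigcup.
Qed.

End Approximation.

Section CountablyGeneratedSections.
Context {d1 d2 : measure_display} {X : measurableType d1} {T : measurableType d2}.

Definition countably_generated_xsections (E : set (X * T)) := exists H : set (set T),
  [/\ countable H, H `<=` measurable & forall x, <<s H >> (xsection E x)].

Lemma countably_generated_xsectionsX A B :
  measurable B -> countably_generated_xsections (A `*` B).
Proof.
move=> mB; exists [set B]; split=> [||x]; [exact: countable1|by move=> _ ->|].
have [Ax|nAx] := pselect (A x).
- by rewrite in_xsectionX ?inE //; exact: sub_sigma_algebra.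
- by rewrite notin_xsectionX ?notin_setE //; exact: sigma_algebra0.
Qed.

Lemma sigma_algebra_countably_generated_xsections :
  sigma_algebra setT countably_generated_xsections.
Proof.
split.
- exists set0; split=> [||x]; [exact: countable0|by []|].
  by rewrite xsection0; exact: sigma_algebra0.
- move=> E [H [cH mH sH]]; exists H; split=> // x.
  rewrite xsectionD (_ : xsection setT x = setT); first exact: sigma_algebraCD.
  by apply/seteqP; split=> y // _; rewrite /xsection /= inE.
- move=> F cF; have /choice [H HF] := cF.
  exists (\bigcup_k H k); split.
  + by apply: bigcup_countable => [|k _]; [exact: countableP|case: (HF k)].
  + by move=> B [k _ HkB]; case: (HF k) => _ + _; apply.
  + move=> x; rewrite xsection_bigcup; apply: sigma_algebra_bigcup => k.
    case: (HF k) => _ _ /(_ x); apply: sub_sigma_algebra2 => B HkB.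
    by exists k.
Qed.

Lemma measurable_countably_generated_xsections {E} :
  measurable E -> countably_generated_xsections E.
Proof.
rewrite measurable_prod_measurableType; apply: smallest_sub.
  exact: sigma_algebra_countably_generated_xsections.
by move=> _ [A _] [B mB] <-; exact: countably_generated_xsectionsX.
Qed.

End CountablyGeneratedSections.

Section PowerProbability.
Context {d : measure_display} {X : measurableType d} {R : realType}.
Variable P : probability X R.

Lemma mfun_cons n : (fun p : X * n.-tuple X => [tuple of p.1 :: p.2]) \in mfun.
Proof. by rewrite inE; exact: measurable_cons. Qed.

Fixpoint power_prob n : probability (n.-tuple X) R :=
  match n with
  | 0 => [the probability _ R of dirac [tuple]]
  | n.+1 => [the probability _ R of
             distribution (P \x power_prob n)%E (mfun_Sub (mfun_cons n))]
  end.

Lemma measurable_cylinder {n} {A : 'I_n -> set X} : (forall i, measurable (A i)) ->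
  measurable [set t : n.-tuple X | forall i, A i (tnth t i)].
Proof.
move=> mA; rewrite (_ : [set t | _] = \bigcap_(i in setT) ((@tnth n X)^~ i @^-1` A i)).
  apply: fin_bigcap_measurable => [|i _]; first exact: finite_finset.
  by rewrite -[X in measurable X]setTI; exact: measurable_tnth.
by apply/seteqP; split=> t /= tA i => [_|]; apply: tA.
Qed.

Lemma power_prob_cylinder {n} {A : 'I_n -> set X} : (forall i, measurable (A i)) ->
  power_prob n [set t | forall i, A i (tnth t i)] = (\prod_(i < n) P (A i))%E.
Proof.
elim: n A => [|n IHn] A mA.
  rewrite big_ord0 (_ : [set t | _] = setT) ?probability_setT //.
  by apply/seteqP; split=> // t _ [].
rewrite big_ord_recl /= /distribution /pushforward /=.
rewrite (_ : _ @^-1` _ = A ord0 `*` [set t | forall i, A (lift ord0 i) (tnth t i)]).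
  have mA' i : measurable (A (lift ord0 i)) := mA (lift ord0 i).
  rewrite product_measure1E //; last exact: (measurable_cylinder mA').
  by rewrite -(IHn _ mA').
apply/seteqP; split=> [[x t] /= tA|[x t] /= [Ax tA] i].
  by split=> [|i]; [exact: (tA ord0)|have := tA (lift ord0 i); rewrite tnthS].
by have [j ->|->] := unliftP ord0 i; rewrite ?tnthS.
Qed.

End PowerProbability.

Lemma product_measure1_lt_xsection {d1 d2 : measure_display}
    {X : measurableType d1} {Y : measurableType d2} {R : realType}
    (Q : probability X R) (P : probability Y R) {E : set (X * Y)} {e : R} :
  measurable E -> ((Q \x P) E < e%:E)%E -> exists x, (P (xsection E x) < e%:E)%E.
Proof.
move=> mE QPE; apply: contrapT => /forallNP Pe.
have e0 : (0 <= e%:E)%E by apply: ltW; exact: le_lt_trans (measure_ge0 _ _) QPE.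
suff : (e%:E <= (Q \x P) E)%E by rewrite leNgt QPE.
rewrite /product_measure1 /= -[e%:E]mule1 -(probability_setT Q) -integral_cst //.
apply: ge0_le_integral => //; first exact: measurable_fun_xsection.
by move=> x _; rewrite /= leNgt; apply/negP; exact: Pe.
Qed.

Lemma measurable_neqb {d} {T : measurableType d} {f g : T -> bool} :
  measurable_fun setT f -> measurable_fun setT g -> measurable [set x | f x != g x].
Proof.
move=> mf mg; have mfg : measurable_fun setT (fun x => if f x then ~~ g x else g x).
  by apply: measurable_fun_ifT => //; exact: measurable_neg.
rewrite (_ : [set x | _] = setT `&` (fun x => if f x then ~~ g x else g x) @^-1` [set true]).
  exact: mfg.
by apply/seteqP; split=> x /=; case: (f x); case: (g x) => //= -[].
Qed.

Section LabelledProblem.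
Context {d : measure_display} {T : measurableType d} {R : realType}.
Variable mu : probability T R.
Context {A : set T}.
Hypothesis mA : measurable A.
Local Open Scope ereal_scope.

Lemma measurable_fun_mem : measurable_fun setT (fun x => x \in A).
Proof.
apply: (measurable_fun_bool true); rewrite setTI.
rewrite (_ : _ @^-1` _ = A) //.
by apply/seteqP; split=> x; [exact: set_mem|exact: mem_set].
Qed.

Lemma mfun_label : (fun x => (x, x \in A)) \in mfun.
Proof. by rewrite inE; apply: measurable_fun_pair => //; exact: measurable_fun_mem. Qed.

Definition label_prob : probability (T * bool)%type R :=
  distribution mu (mfun_Sub mfun_label).

Lemma label_probE B : label_prob B = mu [set x | B (x, x \in A)].
Proof. by []. Qed.

Lemma joint_law_label : joint_law mu \1_A label_prob.
Proof.
move=> B mB; rewrite !label_probE; split.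
  rewrite integral_indic //; congr (mu _); apply/seteqP.
  split=> x [Bx Ax]; split=> //; [exact: set_mem|exact: mem_set].
rewrite (eq_integral (fun x => (\1_(~` A) x : R)%:E)); last first.
  by move=> x _; rewrite indicC indicE; case: (x \in A); rewrite /= ?subrr ?subr0.
rewrite integral_indic //; last exact: measurableC.
congr (mu _); apply/seteqP.
split=> x [Bx Ax]; split=> //=.
- by move=> /mem_set xA; move: Ax; rewrite /= xA.
- by apply/negbTE/negP => /set_mem.
Qed.

Lemma bayes_error_label : bayes_error label_prob = 0.
Proof.
apply/eqP; rewrite eq_le; apply/andP; split.
  apply: ge_ereal_inf; exists 0 => //; exists (fun x => x \in A).
    exact: measurable_fun_mem.
  rewrite label_probE /= (_ : [set x | _] = set0) ?measure0 //.
  by apply/seteqP; split=> x //=; rewrite eqxx.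
by apply: le_ereal_inf_tmp => _ [h _ <-]; exact: measure_ge0.
Qed.

End LabelledProblem.

Section ConsistentRule.
Context {d : measure_display} {T : measurableType d} {R : realType}.
Context {mu : probability T R} {L : learning_rule T}.
Hypotheses (L_meas : is_learning_rule L) (L_consistent : universally_consistent mu L).
Local Open Scope ereal_scope.

Lemma measurable_rule_graph n :
  measurable [set p : n.-tuple (T * bool) * T | L n p.1 p.2].
Proof. by have := L_meas n measurableT [set true] I; rewrite setTI. Qed.

Lemma measurable_rule_error n :
  measurable [set p : n.-tuple (T * bool) * (T * bool) | L n p.1 p.2.1 != p.2.2].
Proof.
apply: measurable_neqb; last exact: measurableT_comp measurable_snd measurable_snd.
apply: (measurableT_comp (L_meas n) (g := fun p => (p.1, p.2.1))).
by apply: measurable_fun_pair => //; exact: measurableT_comp measurable_fst measurable_snd.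
Qed.

Lemma rule_approximates {A} {e} : measurable A -> (0 < e)%R ->
  exists n (s : n.-tuple (T * bool)), mu (symdiff A [set x | L n s x]) < e%:E.
Proof.
move=> mA e0; pose P := label_prob mu mA.
have indic01 x : (0 <= (\1_A x : R) <= 1)%R.
  by rewrite indicE; case: (x \in A); rewrite /= ?lexx ?ler01.
have := L_consistent _ (measurable_indic mA) indic01 P (joint_law_label mu mA)
  (power_prob P) (fun n B mB => power_prob_cylinder P mB).
rewrite bayes_error_label => /ereal_cvg0_lt /(_ e0) [n errn].
have [s Ps] := product_measure1_lt_xsection _ _ (measurable_rule_error n) errn.
exists n, s; move: Ps; rewrite label_probE; congr (mu _ < _).
apply/seteqP; split=> x; rewrite /xsection /symdiff /= in_setE /= /is_true;
  have [Ax|nAx] := pselect (A x); rewrite ?(mem_set Ax) ?(memNset nAx);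
  case: (L n s x) => /=; intuition.
Qed.

Lemma xsection_rule_graph n (s : n.-tuple (T * bool)) :
  xsection [set p : n.-tuple (T * bool) * T | L n p.1 p.2] s = [set x | L n s x].
Proof. by apply/seteqP; split=> x; rewrite /xsection /= inE. Qed.

Lemma countable_dense_generator :
  exists2 G : set (set T), countable G & generates_dense_subalgebra mu G.
Proof.
have /choice [H HP] := fun n =>
  measurable_countably_generated_xsections (measurable_rule_graph n).
pose G := \bigcup_n H n.
have GM : G `<=` measurable by move=> B [n _]; case: (HP n) => _ + _; apply.
exists G; first by apply: bigcup_countable => [|n _]; [exact: countableP|case: (HP n)].
split=> // A mA e e0; have e2 : (0 < e / 2)%R by rewrite divr_gt0.
have [n [s As]] := rule_approximates mA e2.
have [mLs Ls_approx] : approximable mu G [set x | L n s x].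
  apply: sigma_approximable GM _ _; rewrite -xsection_rule_graph.
  by case: (HP n) => _ _ /(_ s); apply: sub_sigma_algebra2 => B HnB; exists n.
have [B GB LsB] := Ls_approx _ e2.
exists B => //; rewrite [e]splitr EFinD; apply: le_lt_trans (lteD As LsB).
exact: (measure_symdiff_trans mu mA mLs (gen_algebra_measurable GM _ GB)).
Qed.

End ConsistentRule.

Section FiniteSpace.
Context {d : measure_display} {T : measurableType d}.
Hypothesis finT : finite_set [set: T].

Definition atom (t : T) : set T := [set s | forall B, measurable B -> B t -> B s].

Lemma measurable_atom t : measurable (atom t).
Proof.
have /choice [sep sepP] : forall s, exists B : set T,
    [/\ measurable B, B t & ~ atom t s -> ~ B s].
  move=> s; have [ts|] := pselect (atom t s); first by exists setT.
  by move=> /existsNP[B /not_implyP[mB /not_implyP[Bt nBs]]]; exists B.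
rewrite (_ : atom t = \bigcap_(s in setT) sep s).
  by apply: fin_bigcap_measurable => [|s _]; [exact: finT|case: (sepP s)].
apply/seteqP; split=> [x tx s _|x septx]; first by case: (sepP s) => mB Bt _; exact: tx.
by apply: contrapT => ntx; case: (sepP x) => _ _ /(_ ntx); apply; exact: septx.
Qed.

Lemma bigcup_atom {B} : measurable B -> \bigcup_(t in B) atom t = B.
Proof.
move=> mB; apply/seteqP; split=> [x [t Bt tx]|x Bx]; first exact: tx.
by exists x.
Qed.

Lemma maharam_type_le_finite (R : realType) (mu : probability T R) :
  maharam_type_le mu [set: T].
Proof.
exists (range atom); split; last exact: card_image_le.
split=> [_ [t _ <-]|A mA e e0]; first exact: measurable_atom.
exists A; last by rewrite setDv setU0 measure0 lte_fin.
rewrite -(bigcup_atom mA); apply: gen_algebra_bigcup => [|t _].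
  exact: sub_finite_set finT.
by apply: gen_algebra_sub; exists t.
Qed.

End FiniteSpace.

Theorem mainTheorem4 (d : measure_display) (T : measurableType d) (R : realType)
  (mu : probability T R) :
  (exists L : learning_rule T, is_learning_rule L /\ universally_consistent mu L) ->
  maharam_type_le mu [set: T].
Proof.
move=> [L [L_meas L_consistent]].
have [finT|infT] := pselect (finite_set [set: T]).
  exact: maharam_type_le_finite.
have [G cG denseG] := countable_dense_generator L_meas L_consistent.
by exists G; split=> //; apply: card_le_trans cG _; exact/infiniteP.
Qed.
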